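(* Let $\mathcal{S}=(L,A,<)$ be an abstract numeration system built on a prefix-closed regular language $L$. A sequence $\mathbf{x}$ over a finite alphabet is $\mathcal{S}$-automatic if and only if the labeled tree $T(L)$ decorated by $\mathbf{x}$ is rational.
   Context: An abstract numeration system is a triple $\mathcal{S}=(L,A,<)$ with $L$ an infinite language over a totally ordered finite alphabet $A$; $\mathrm{rep}_{\mathcal{S}}(n)$ is the $(n+1)$st word of $L$ in radix order (shorter words first, then lexicographic), and $\mathrm{val}_{\mathcal{S}}$ is its inverse. $\mathbf{x}=x_0x_1\cdots$ is $\mathcal{S}$-automatic if there is a deterministic finite automaton with output $(Q,q_0,A,\delta,\tau)$ with $x_n=\tau(\delta(q_0,\mathrm{rep}_{\mathcal{S}}(n)))$ for all $n$. $T(L)$ is the tree whose nodes are the words of $L$, with an edge labeled $d$ from $w$ to $wd$ whenever $w,wd\in L$; it is decorated by $\mathbf{x}$ by giving node $w$ the decoration $x_{\mathrm{val}_{\mathcal{S}}(w)}$. For $w\in L$, the suffix $T[w]$ has domain $w^{-1}L=\{u: wu\in L\}$ and node $u$ of $T[w]$ has decoration $x_{\mathrm{val}_{\mathcal{S}}(wu)}$; two suffixes are equal if they have the same domain and the same decorations at every node of the domain. The decorated tree is rational if it has finitely many distinct suffixes. *)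

From mathcomp Require Import all_boot all_order.
From Stdlib Require Import ClassicalEpsilon.
Set Implicit Arguments. Unset Strict Implicit. Unset Printing Implicit Defensive.
Import Order.TTheory.
Local Open Scope order_scope.

Section ANS.
Variables (d : Order.disp_t) (A : finOrderType d).

Fixpoint lexlt (u v : seq A) : bool :=
  match u, v with
  | [::], _ :: _ => true
  | a :: u', b :: v' => (a < b) || ((a == b) && lexlt u' v')
  | _, _ => false
  end.

Definition radix_lt (u v : seq A) : bool :=
  (size u < size v)%N || ((size u == size v) && lexlt u v).

(* val_S w = number of words of L radix-smaller than w
   (only words of length <= |w| can be radix-smaller than w) *)
Definition valS (L : pred (seq A)) (w : seq A) : nat :=
  \sum_(m < (size w).+1)
     #|[pred t : m.-tuple A | L (tval t) && radix_lt (tval t) w]|.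

(* rep_S n = the (n+1)st word of L in radix order, i.e. the word w of L
   with val_S w = n (unique; it exists when L is infinite). *)
Definition repS (L : pred (seq A)) (n : nat) : seq A :=
  epsilon (inhabits [::]) (fun w => L w /\ valS L w = n).

Definition prefix_closed (L : pred (seq A)) : Prop :=
  forall u v : seq A, L (u ++ v) -> L u.

Definition infinite_lang (L : pred (seq A)) : Prop :=
  ~ (exists s : seq (seq A), forall w, L w -> w \in s).

Definition regular_lang (L : pred (seq A)) : Prop :=
  exists (Q : finType) (q0 : Q) (delta : Q -> A -> Q) (F : pred Q),
    forall w, L w = F (foldl delta q0 w).

Definition S_automatic (L : pred (seq A)) (B : Type) (x : nat -> B) : Prop :=
  exists (Q : finType) (q0 : Q) (delta : Q -> A -> Q) (tau : Q -> B),
    forall n, x n = tau (foldl delta q0 (repS L n)).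

(* the suffix T[w] of the decorated tree T(L): the partial map on the
   domain w^{-1}L giving node u the decoration x_{val(wu)} (None outside
   the domain). Two suffixes are equal iff these maps are equal. *)
Definition tree_suffix (L : pred (seq A)) (B : Type) (x : nat -> B)
    (w : seq A) : seq A -> option B :=
  fun u => if L (w ++ u) then Some (x (valS L (w ++ u))) else None.

Definition rational_tree (L : pred (seq A)) (B : Type) (x : nat -> B) : Prop :=
  exists s : seq (seq A -> option B),
    forall w, L w -> List.In (tree_suffix L x w) s.

End ANS.

From mathcomp Require Import all_boot all_order.
From Stdlib Require Import ClassicalEpsilon Classical FunctionalExtensionality.
Set Implicit Arguments. Unset Strict Implicit. Unset Printing Implicit Defensive.
Import Order.TTheory.

(* The valuation of a word w of L is the rank of w in the radix-sorted list of
   the words of L of length at most N, for any N >= |w|; hence val is injective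
   on L and, L being infinite, onto the naturals, with inverse rep.
   If L and x are recognised by automata, the suffix T[w] is therefore a function
   of the pair of states reached on w, so there are finitely many suffixes.
   Conversely, T[wa] is the left quotient of T[w] by a, so finitely many suffixes
   form the states of an automaton which, on rep(n), reaches T[rep(n)] and reads
   x_n at its root; prefix-closure makes every prefix of a word of L a node. *)

Lemma List_In_map (T : eqType) (U : Type) (f : T -> U) (s : seq T) (a : T) :
  a \in s -> List.In (f a) (map f s).
Proof. by elim: s => //= b s IH; rewrite in_cons => /orP[/eqP ->|/IH]; [left|right]. Qed.

Lemma List_In_nth (T : Type) (x0 : T) (s : seq T) (a : T) :
  List.In a s -> exists2 i, (i < size s)%N & nth x0 s i = a.
Proof.
elim: s => //= b s IH [->|/IH [i lt_is <-]]; first by exists 0.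
by exists i.+1.
Qed.

Section Valuation.
Variables (d : Order.disp_t) (A : finOrderType d).
Implicit Types u v w : seq A.

Definition radix_key w : nat *l seqlexi A := (size w, w).

Lemma radix_key_inj : injective radix_key.
Proof. by move=> u v [_]. Qed.

Lemma lexltE u v : lexlt u v = (u < v :> seqlexi A)%O.
Proof. by elim: u v => [|a u IH] [|b v] //=; rewrite ltxi_cons IH; case: ltgtP. Qed.

Lemma radix_ltE u v : radix_lt u v = (radix_key u < radix_key v)%O.
Proof. by rewrite ltxi_pair /radix_lt lexltE !leEnat; case: ltngtP. Qed.

Lemma radix_lt_size u v : radix_lt u v -> (size u <= size v)%N.
Proof. by case/orP=> [/ltnW|/andP[/eqP -> _]]. Qed.

Definition words_of_size m : seq (seq A) := [seq tval t | t : m.-tuple A].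

Fixpoint words_upto N : seq (seq A) :=
  if N is N'.+1 then words_upto N' ++ words_of_size N else words_of_size 0.

Lemma mem_words_of_size m w : (w \in words_of_size m) = (size w == m).
Proof.
apply/mapP/eqP => [[t _ ->]|<-]; first exact: size_tuple.
by exists (in_tuple w); rewrite ?mem_enum.
Qed.

Lemma uniq_words_of_size m : uniq (words_of_size m).
Proof. by rewrite (map_inj_uniq val_inj) enum_uniq. Qed.

Lemma mem_words_upto N w : (w \in words_upto N) = (size w <= N)%N.
Proof.
elim: N => [|N IH] /=; first by rewrite mem_words_of_size leqn0.
by rewrite mem_cat IH mem_words_of_size (leq_eqVlt _ N.+1) orbC.
Qed.

Lemma uniq_words_upto N : uniq (words_upto N).
Proof.
elim: N => [|N IH] /=; first exact: uniq_words_of_size.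
rewrite cat_uniq IH uniq_words_of_size andbT /=.
by apply/hasPn => w; rewrite mem_words_of_size mem_words_upto => /eqP ->; rewrite ltnn.
Qed.

Lemma count_words_upto N (P : pred (seq A)) :
  count P (words_upto N) = \sum_(m < N.+1) count P (words_of_size m).
Proof. by elim: N => [|N IH]; rewrite big_ord_recr /= ?big_ord0 ?count_cat ?IH. Qed.

Lemma card_tuple_pred m (P : pred (seq A)) :
  #|[pred t : m.-tuple A | P t]| = count P (words_of_size m).
Proof.
rewrite count_map cardE /enum_mem size_filter /enum_mem count_filter.
by apply: eq_count => t; rewrite !inE andbT.
Qed.

Variable L : pred (seq A).

Lemma valS_count N w : (size w <= N)%N ->
  valS L w = count (fun t => L t && radix_lt t w) (words_upto N).
Proof.
move=> le_wN; pose P t := L t && radix_lt t w; rewrite count_words_upto /valS.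
rewrite (big_ord_widen N.+1 (fun m => #|[pred t : m.-tuple A | P t]|)) //.
rewrite big_mkcond /=; apply: eq_bigr => m _; rewrite card_tuple_pred.
case: ltnP => // lt_wm; rewrite (eq_in_count (a2 := pred0)) ?count_pred0 // => t.
rewrite mem_words_of_size => /eqP size_t; apply/negbTE/negP => /andP[_ /radix_lt_size].
by rewrite size_t leqNgt lt_wm.
Qed.

Definition radix_keys N : seq (nat *l seqlexi A) :=
  sort <=%O [seq radix_key t | t <- words_upto N & L t].

Lemma radix_keys_sorted N : sorted <%O (radix_keys N).
Proof.
by rewrite sort_lt_sorted (map_inj_uniq radix_key_inj) filter_uniq ?uniq_words_upto.
Qed.

Lemma mem_radix_keys N w : (radix_key w \in radix_keys N) = L w && (size w <= N)%N.
Proof. by rewrite mem_sort (mem_map radix_key_inj) mem_filter mem_words_upto. Qed.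

Lemma size_radix_keys N : size (radix_keys N) = count L (words_upto N).
Proof. by rewrite size_sort size_map size_filter. Qed.

Lemma valS_count_keys N w : (size w <= N)%N ->
  valS L w = count (< radix_key w)%O (radix_keys N).
Proof.
move=> /valS_count ->; rewrite count_sort count_map count_filter.
by apply: eq_count => t; rewrite /= radix_ltE andbC.
Qed.

Lemma valS_index N w : L w -> (size w <= N)%N ->
  valS L w = index (radix_key w) (radix_keys N).
Proof.
move=> Lw le_wN; have kw : radix_key w \in radix_keys N by rewrite mem_radix_keys Lw.
rewrite (valS_count_keys le_wN) -{1}(nth_index (radix_key w) kw).
by rewrite count_lt_nth ?index_mem ?radix_keys_sorted.
Qed.

Lemma valS_inj u w : L u -> L w -> valS L u = valS L w -> u = w.
Proof.
move=> Lu Lw; set N := maxn (size u) (size w).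
have [le_uN le_wN] : (size u <= N)%N /\ (size w <= N)%N by rewrite leq_maxl leq_maxr.
rewrite (valS_index Lu le_uN) (valS_index Lw le_wN).
move/(index_inj (radix_key u)); rewrite !mem_radix_keys Lu Lw le_uN le_wN.
by move=> /(_ isT isT) /radix_key_inj.
Qed.

Lemma repS_valS w : L w -> repS L (valS L w) = w.
Proof.
move=> Lw; have [L_rep val_rep] := epsilon_spec (inhabits [::])
  (fun v => L v /\ valS L v = valS L w) (ex_intro _ w (conj Lw erefl)).
exact: valS_inj L_rep Lw val_rep.
Qed.

Lemma valS_nth N k : (k < size (radix_keys N))%N -> exists2 w, L w & valS L w = k.
Proof.
move=> lt_k; have : nth (radix_key [::]) (radix_keys N) k \in radix_keys N.
  exact: mem_nth.
rewrite mem_sort => /mapP [w]; rewrite mem_filter mem_words_upto => /andP[Lw le_wN] Ew.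
by exists w; rewrite // (valS_count_keys le_wN) -Ew count_lt_nth ?radix_keys_sorted.
Qed.

Hypothesis L_infinite : infinite_lang L.

Lemma exists_longer_word N : exists2 w, L w & (N < size w)%N.
Proof.
apply: NNPP => no_longer; apply: L_infinite; exists (words_upto N) => w Lw.
by rewrite mem_words_upto leqNgt; apply/negP => lt_Nw; apply: no_longer; exists w.
Qed.

Lemma count_words_upto_unbounded n : exists N, (n <= count L (words_upto N))%N.
Proof.
elim: n => [|n [N le_nN]]; first by exists 0.
have [w Lw lt_Nw] := exists_longer_word N.
exists (size w); apply: leq_ltn_trans le_nN _; rewrite -!size_filter.
have : uniq (w :: filter L (words_upto N)).
  rewrite /= filter_uniq ?uniq_words_upto // mem_filter mem_words_upto.
  by rewrite leqNgt lt_Nw andbF.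
move/uniq_leq_size; apply=> t; rewrite inE !mem_filter !mem_words_upto.
case/orP=> [/eqP -> | /andP[Lt le_tN]]; first by rewrite Lw leqnn.
by rewrite Lt (leq_trans le_tN (ltnW lt_Nw)).
Qed.

Lemma repS_spec n : L (repS L n) /\ valS L (repS L n) = n.
Proof.
apply: (epsilon_spec _ (fun w => L w /\ valS L w = n)).
have [N le_nN] := count_words_upto_unbounded n.+1.
have [|w Lw val_w] := @valS_nth N n; first by rewrite size_radix_keys.
by exists w.
Qed.

End Valuation.

Section FiniteQuotients.
Variables (Sigma T : Type) (P : pred (seq Sigma)) (F : seq Sigma -> T).
Variable s : seq (seq Sigma -> T).
Hypothesis P_prefix : forall u v, P (u ++ v) -> P u.
Hypothesis quotients_in : forall w, P w -> List.In (fun u => F (w ++ u)) s.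

Lemma automaton_of_finite_quotients :
  exists (Q : finType) (q0 : Q) (delta : Q -> Sigma -> Q) (out : Q -> T),
    forall w, P w -> F w = out (foldl delta q0 w).
Proof.
(* [state f] is an index of [f] in [s] when [f] occurs in [s]; the extra index
   [size s] only makes the state type inhabited. *)
pose state f : 'I_(size s).+1 := epsilon (inhabits ord0) (fun i => nth F s i = f).
have stateK f : List.In f s -> nth F s (state f) = f.
  case/(List_In_nth F) => i lt_is <-.
  apply: (epsilon_spec _ (fun j : 'I_(size s).+1 => nth F s j = nth F s i)).
  by exists (Ordinal (leqW lt_is)).
pose delta (i : 'I_(size s).+1) a := state (fun u => nth F s i (a :: u)).
exists _, (state F), delta, (fun i : 'I_(size s).+1 => nth F s i [::]).
have reach w : P w -> nth F s (foldl delta (state F) w) = fun u => F (w ++ u).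
  elim/last_ind: w => [|w a IH] Pwa; first exact: stateK (quotients_in Pwa).
  rewrite foldl_rcons /delta IH; last by apply: (P_prefix (v := [:: a])); rewrite cats1.
  have -> : (fun u => F (w ++ a :: u)) = fun u => F (rcons w a ++ u).
    by apply: functional_extensionality => u; rewrite cat_rcons.
  exact: stateK (quotients_in Pwa).
by move=> w /reach ->; rewrite cats0.
Qed.

End FiniteQuotients.

Section Characterization.
Variables (d : Order.disp_t) (A : finOrderType d) (L : pred (seq A)).
Variables (B : finType) (x : nat -> B).

Lemma regular_automatic_rational : regular_lang L -> S_automatic L x -> rational_tree L x.
Proof.
move=> [Q1 [q1 [d1 [F L_F]]]] [Q2 [q2 [d2 [tau x_tau]]]].
pose suffix_from (q : Q1 * Q2) (u : seq A) :=
  if F (foldl d1 q.1 u) then Some (tau (foldl d2 q.2 u)) else None.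
exists (map suffix_from (enum {: Q1 * Q2})) => w _.
suff -> : tree_suffix L x w = suffix_from (foldl d1 q1 w, foldl d2 q2 w).
  by apply: List_In_map; rewrite mem_enum.
apply: functional_extensionality => u; rewrite /tree_suffix /suffix_from /= L_F foldl_cat.
by case: ifP => // F_wu; rewrite x_tau repS_valS ?foldl_cat // L_F foldl_cat.
Qed.

Lemma rational_automatic : infinite_lang L -> prefix_closed L ->
  rational_tree L x -> S_automatic L x.
Proof.
move=> L_infinite L_prefix [s suffixes_in].
have [Q [q0 [delta [out out_suffix]]]] :=
  @automaton_of_finite_quotients _ _ L (tree_suffix L x [::]) s L_prefix suffixes_in.
exists Q, q0, delta, (fun q => odflt (x 0) (out q)) => n.
have [L_rep val_rep] := repS_spec L_infinite n.
by rewrite -out_suffix // /tree_suffix /= L_rep val_rep.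
Qed.

End Characterization.

Theorem mainTheorem8 (d : Order.disp_t) (A : finOrderType d)
    (L : pred (seq A)) (B : finType) (x : nat -> B) :
  infinite_lang L -> prefix_closed L -> regular_lang L ->
  (S_automatic L x <-> rational_tree L x).
Proof.
move=> L_infinite L_prefix L_regular; split.
  exact: regular_automatic_rational L_regular.
exact: rational_automatic L_infinite L_prefix.
Qed.
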